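(* Let $p \in \omega^*$ be a selective ultrafilter and consider the subspace $\{p\} \cup \omega$ of $\beta\omega$. Then $\mathsf{S}_1(\Omega_p, \Omega_p)$ holds in $\{p\}\cup\omega$, but $(\{p\} \cup \omega) \times S_{\mathfrak{c}}$ does not have countable tightness at $\langle p, 0\rangle$.
   Context: $\omega^* = \beta\omega \setminus \omega$ is the set of free ultrafilters on $\omega$; in $\{p\}\cup\omega$ the points of $\omega$ are isolated and the neighborhoods of $p$ are the sets $\{p\}\cup P$ with $P \in p$. A point $p \in \omega^*$ is a selective ultrafilter if for every partition $\{A_n : n < \omega\}$ of $\omega$ with $A_n \notin p$ for each $n$ there is $P \in p$ with $|P \cap A_n| = 1$ for each $n$. $\Omega_p$ is the collection of sets $A$ with $p \notin A$ and $p \in \overline{A}$; $\mathsf{S}_1(\Omega_p,\Omega_p)$ means that for every sequence $(A_n)_{n\in\omega}$ of elements of $\Omega_p$ one can select $a_n \in A_n$ with $\{a_n : n \in \omega\} \in \Omega_p$. $S_{\mathfrak{c}}$ is the sequential fan: the set $\{0\} \cup \bigcup_{\alpha < \mathfrak{c}} \{z_n^\alpha : n < \omega\}$ with all $z_n^\alpha$ distinct and isolated, and with basic neighborhoods of $0$ the sets $V(f) = \{0\} \cup \bigcup_{\alpha<\mathfrak{c}}\{z_n^\alpha : n \ge f(\alpha)\}$ for $f \in {}^{\mathfrak{c}}\omega$. A space $Z$ has countable tightness at $z$ if whenever $z \in \overline{A}$ there is a countable $B \subset A$ with $z \in \overline{B}$. *)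

From mathcomp Require Import all_boot.
From mathcomp Require Import boolp classical_sets cardinality.
Set Implicit Arguments. Unset Strict Implicit. Unset Printing Implicit Defensive.
Local Open Scope classical_set_scope.

Definition free_ultrafilter (p : set (set nat)) : Prop :=
  (p setT /\ ~ p set0) /\
  [/\ (forall A B, p A -> A `<=` B -> p B),
      (forall A B, p A -> p B -> p (A `&` B)),
      (forall A, p A \/ p (~` A)) &
      (forall A, finite_set A -> ~ p A)].

Definition selective (p : set (set nat)) : Prop :=
  forall A : nat -> set nat,
    (forall n, A n !=set0) ->
    (forall m n, m <> n -> A m `&` A n = set0) ->
    \bigcup_n A n = setT ->
    (forall n, ~ p (A n)) ->
    exists P, p P /\ forall n, exists k, P `&` A n = [set k].

(* Spaces given by neighbourhood bases: B x U means "U is a basic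
   neighbourhood of x". *)
Definition cl_by {T : Type} (B : T -> set T -> Prop) (A : set T) (x : T) : Prop :=
  forall U, B x U -> U `&` A !=set0.

Definition countably_tight_at {T : Type} (B : T -> set T -> Prop) (x : T) : Prop :=
  forall A : set T, cl_by B A x ->
    exists C : set T, [/\ C `<=` A, countable C & cl_by B C x].

(* The space {p} u omega: None is the point p, Some n is n. *)
Definition Xp := option nat.

Definition baseX (p : set (set nat)) (x : Xp) (U : set Xp) : Prop :=
  match x with
  | None => exists P, p P /\ U = [set None] `|` (Some @` P)
  | Some n => U = [set Some n]
  end.

Definition Omega_p (p : set (set nat)) (A : set Xp) : Prop :=
  ~ A None /\ cl_by (baseX p) A None.

Definition S1_Omega_p (p : set (set nat)) : Prop :=
  forall A : nat -> set Xp, (forall n, Omega_p p (A n)) ->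
    exists a : nat -> Xp, (forall n, A n (a n)) /\ Omega_p p (range a).

(* The sequential fan S_c. The index set c is represented by nat -> bool
   (a set of cardinality continuum); None is 0, Some (alpha, n) is z_n^alpha. *)
Definition cindex := nat -> bool.
Definition Sc := option (cindex * nat).

Definition Vfan (f : cindex -> nat) : set Sc :=
  [set None] `|` [set z | exists a n, z = Some (a, n) /\ (f a <= n)%N].

Definition baseSc (y : Sc) (U : set Sc) : Prop :=
  match y with
  | None => exists f : cindex -> nat, U = Vfan f
  | Some z => U = [set Some z]
  end.

Definition baseProd {S T : Type} (BS : S -> set S -> Prop) (BT : T -> set T -> Prop)
  (z : S * T) (W : set (S * T)) : Prop :=
  exists U V, [/\ BS z.1 U, BT z.2 V & W = U `*` V].

From mathcomp Require Import all_boot.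
From mathcomp Require Import boolp classical_sets cardinality.
Set Implicit Arguments. Unset Strict Implicit. Unset Printing Implicit Defensive.
Local Open Scope classical_set_scope.

(* Selectivity gives the diagonal property: for members B_n of p there are
   a_n in B_n whose range is again in p.  This is S_1(Omega_p, Omega_p),
   since A is in Omega_p iff its trace on omega is in p.
   For the product, let A consist of the points <n, z_n^alpha> with n in
   alpha and alpha not in p (subsets of omega serve as fan indices).  Every
   member of p has an unbounded subset outside p, so <p, 0> is in the closure
   of A.  A countable subset of A involves only countably many alpha_k; a
   diagonal sequence a avoiding alpha_k from index k on has range(a) in p,
   and range(a) times the fan neighbourhood f(alpha_k) = 1 + max_{i<k} a_i
   misses that subset. *)

Definition unbounded (A : set nat) := forall N, exists x, A x /\ (N <= x)%N.

Lemma unbounded_split (A : set nat) : unbounded A ->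
  exists2 B, B `<=` A & unbounded B /\ unbounded (A `\` B).
Proof.
move=> Aunb; have [next nextP] := choice (fun N => Aunb N.+1).
pose s k := iter k.+1 next 0.
have sA k : A (s k) by case: (nextP (iter k next 0)).
have s_lt : {homo s : m n / (m < n)%N}.
  by apply: homo_ltn => [y x z /ltn_trans|k]; [apply|case: (nextP (s k))].
have s_ge k : (k <= s k)%N.
  by elim: k => // k IHk; apply: leq_ltn_trans IHk (s_lt _ _ (ltnSn k)).
have s_inj : injective s.
  by move=> m n e; apply/eqP; case: ltngtP => // /s_lt; rewrite e ltnn.
exists (s @` [set n | ~~ odd n]); first by move=> _ [n _ <-].
split=> N.
- exists (s N.*2); split; first by exists N.*2; rewrite //= odd_double.
  by rewrite (leq_trans _ (s_ge _)) // -addnn leq_addl.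
- exists (s N.*2.+1); split; last by rewrite (leq_trans _ (s_ge _)) // -addnn leqW ?leq_addl.
  split=> // -[m /= em /s_inj mE].
  by move: em; rewrite mE /= odd_double.
Qed.

Section SelectiveUltrafilter.
Variable p : set (set nat).
Hypothesis p_uf : free_ultrafilter p.

Lemma ufS A B : p A -> A `<=` B -> p B.
Proof. by case: p_uf => _ [+ _ _ _]; apply. Qed.

Lemma ufI A B : p A -> p B -> p (A `&` B).
Proof. by case: p_uf => _ [_ + _ _]; apply. Qed.

Lemma ufC A : ~ p A -> p (~` A).
Proof. by case: p_uf => _ [_ _ + _] => /(_ A) []. Qed.

Lemma uf_neq0 A : p A -> A !=set0.
Proof.
move=> pA; apply/set0P/eqP => A0; case: p_uf => -[_ p0] _.
by apply: p0; rewrite -A0.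
Qed.

Lemma uf_disjoint A B : p A -> p B -> A `&` B = set0 -> False.
Proof. by move=> pA pB AB0; have /uf_neq0 := ufI pA pB; rewrite AB0 => -[]. Qed.

Lemma uf_notU A B : ~ p A -> ~ p B -> ~ p (A `|` B).
Proof.
move=> nA nB pAB; apply: (uf_disjoint pAB (ufI (ufC nA) (ufC nB))).
by apply/seteqP; split=> x // [[Ax|Bx] [nAx nBx]].
Qed.

Lemma uf_geq N : p [set x | (N <= x)%N].
Proof.
have [_ [_ _ _ /(_ _ (finite_II N)) /ufC pN]] := p_uf.
by apply: (ufS pN) => x /= /negP; rewrite -leqNgt.
Qed.

Lemma uf_unbounded P : p P -> unbounded P.
Proof. by move=> pP N; apply: uf_neq0 (ufI pP (uf_geq N)). Qed.

Lemma uf_unbounded_notin P : p P ->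
  exists2 alpha, ~ p alpha & alpha `<=` P /\ unbounded alpha.
Proof.
move=> /uf_unbounded /unbounded_split [B BP [Bunb PBunb]].
have [pB|nB] := pselect (p B); last by exists B.
exists (P `\` B); last by split.
by move=> pPB; apply: (uf_disjoint pB pPB); apply/seteqP; split=> x // [? []].
Qed.

Hypothesis p_sel : selective p.

(* On the parity class odd x = b, chosen outside p, h enumerates every n, so
   the pieces h^-1(n) of the partition are nonempty and still not in p. *)
Lemma selective_inj_on (g : nat -> nat) :
  (forall n, ~ p (g @^-1` [set n])) ->
  exists2 P, p P & forall x y, P x -> P y -> g x = g y -> x = y.
Proof.
move=> small_fibres.
have [b nD] : exists b, ~ p [set x | odd x = b].
  have [pD|] := pselect (p [set x | odd x = true]); last by exists true.
  exists false => pD'; apply: (uf_disjoint pD pD').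
  by apply/seteqP; split=> x // [/= -> ].
pose h x := if odd x == b then x./2 else g x.
have [P [pP Psel]] : exists P, p P /\ forall n, exists k, P `&` h @^-1` [set n] = [set k].
  apply: p_sel.
  - move=> n; exists (b + n.*2)%N.
    by rewrite /h /= oddD oddb odd_double addbF eqxx half_bit_double.
  - by move=> m n mn; apply/seteqP; split=> x // [/= hm hn]; apply: mn; rewrite -hm -hn.
  - by apply/seteqP; split=> x // _; exists (h x).
  - move=> n; apply: contra_not (uf_notU nD (small_fibres n)) => pF.
    by apply: (ufS pF) => x; rewrite /h /=; case: eqP => [|_]; [left|right].
exists (P `&` ~` [set x | odd x = b]); first exact: ufI pP (ufC nD).
move=> x y [Px /= /eqP/negbTE Dx] [Py /= /eqP/negbTE Dy] gxy.
have [k Pk] := Psel (g x).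
have hx : (P `&` h @^-1` [set g x]) x by split=> //; rewrite /= /h Dx.
have hy : (P `&` h @^-1` [set g x]) y by split=> //; rewrite /= /h Dy gxy.
by move: hx hy; rewrite Pk => /= -> ->.
Qed.

(* g x is the first index n with x outside C n; the fibres of g are small
   because g^-1(n) misses C n, and on a set where g is injective the points
   with g x = n.+1 can serve as a n. *)
Lemma selective_diagonal (B : nat -> set nat) : (forall n, p (B n)) ->
  exists a : nat -> nat, (forall n, B n (a n)) /\ p (range a).
Proof.
move=> pB; pose C n := B n `&` [set x | (n <= x)%N].
have pC n : p (C n) by apply: ufI (pB n) (uf_geq n).
have first_exit x : exists n, ~ C n x /\ forall m, (m < n)%N -> C m x.
  have exit : exists n, `[< ~ C n x >].
    by exists x.+1; apply/asboolP => -[_]; rewrite /= ltnn.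
  case: (ex_minnP exit) => n /asboolP nC n_min; exists n; split=> // m mn.
  by apply: contrapT => /asboolP /n_min; rewrite leqNgt mn.
have [g gP] := choice first_exit.
have [P pP g_inj] : exists2 P, p P & forall x y, P x -> P y -> g x = g y -> x = y.
  apply: selective_inj_on => n pF; have [x [/= gx Cx]] := uf_neq0 (ufI pF (pC n)).
  by case: (gP x); rewrite gx.
pose Q := P `&` C 0.
have pick n : exists y, C n y /\ forall x, Q x -> g x = n.+1 -> y = x.
  have [[x [Qx gx]]|none] := pselect (exists x, Q x /\ g x = n.+1).
    exists x; split; first by case: (gP x) => _; apply; rewrite gx.
    by move=> x' [Px' _] gx'; apply: g_inj => //; [case: Qx|rewrite gx gx'].
  have [y Cy] := uf_neq0 (pC n).
  by exists y; split=> // x Qx gx; exfalso; apply: none; exists x.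
have [a aP] := choice pick.
exists a; split; first by move=> n; case: (aP n) => -[].
apply: (ufS (ufI pP (pC 0))) => x Qx.
case gx: (g x) => [|n]; first by case: (gP x); rewrite gx; case: Qx.
by exists n => //; case: (aP n) => _ /(_ x Qx gx).
Qed.

Lemma diagonal_avoid (E : nat -> set nat) : (forall k, ~ p (E k)) ->
  exists a : nat -> nat, p (range a) /\ forall k i, (k <= i)%N -> ~ E k (a i).
Proof.
move=> nE; pose B n := [set m | forall k, (k <= n)%N -> ~ E k m].
have pB n : p (B n).
  elim: n => [|n IHn].
    by apply: (ufS (ufC (nE 0))) => m nm k; rewrite leqn0 => /eqP ->.
  apply: (ufS (ufI IHn (ufC (nE n.+1)))) => m [Bm nm] k.
  by rewrite leq_eqVlt => /predU1P [->|]; last apply: Bm.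
have [a [aB pa]] := selective_diagonal pB.
by exists a; split=> // k i ki; apply: aB.
Qed.

Lemma Omega_p_trace A : Omega_p p A -> p [set k | A (Some k)].
Proof.
move=> [nA0 clA]; apply: contrapT => nA.
by have [_ [[->|[k /= nAk <-]]] //] := clA _ (ex_intro _ _ (conj (ufC nA) erefl)).
Qed.

Lemma S1_Omega_p_selective : S1_Omega_p p.
Proof.
move=> A /(_ _) /Omega_p_trace pA.
have [a [Aa pa]] := selective_diagonal pA.
exists (Some \o a); split=> //; split; first by case.
move=> _ [P [pP ->]]; have [x [Px [n _ an]]] := uf_neq0 (ufI pP pa).
by exists (Some x); split; [right; exists x|exists n => //; rewrite /= an].
Qed.

Definition fan_diagonal : set (Xp * Sc) :=
  [set z | exists (alpha : cindex) n,
    [/\ z = (Some n, Some (alpha, n)), alpha n & ~ p [set m | alpha m]]].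

Lemma fan_diagonal_closure :
  cl_by (baseProd (baseX p) baseSc) fan_diagonal (None, None).
Proof.
move=> _ [U [V [/= [P [pP ->]] [f ->] ->]]].
have [S nS [SP Sunb]] := uf_unbounded_notin pP.
pose alpha n : bool := `[< S n >].
have [x [Sx fx]] := Sunb (f alpha).
exists (Some x, Some (alpha, x)); split.
  split; first by right; exists x => //; apply: SP.
  by right; exists alpha, x.
exists alpha, x; split=> //; first exact/asboolP.
by apply: contra_not nS => pa; apply: (ufS pa) => m /asboolP.
Qed.

Definition fan_label (z : Xp * Sc) : cindex :=
  if z.2 is Some (alpha, _) then alpha else fun _ => false.

Lemma countable_fan_diagonal_not_closure C :
  C `<=` fan_diagonal -> countable C ->
  ~ cl_by (baseProd (baseX p) baseSc) C (None, None).
Proof.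
move=> CA cC clC.
have /pcard_surjP [g g_onto] : countable (fan_label @` C).
  exact: sub_countable (card_image_le _ _) cC.
(* g may also hit labels outside C, possibly in p; those are emptied. *)
pose E k := [set m | g k m /\ ~ p [set m | g k m]].
have nE k : ~ p (E k).
  move=> pE; have [_ [_ []]] := uf_neq0 pE.
  by apply: (ufS pE) => m [].
have [a [pa a_avoid]] := diagonal_avoid nE.
have label_index alpha : exists k, (exists k', g k' = alpha) -> g k = alpha.
  have [[k' gk']|no_k] := pselect (exists k', g k' = alpha).
    by exists k'.
  by exists 0 => /no_k.
have [k kP] := choice label_index.
pose f alpha := \max_(i < k alpha) (a i).+1.
have [z [[Uz Vz] Cz]] : exists z, ((([set None] `|` (Some @` range a)) `*` Vfan f) `&` C) z.
  by apply: clC; exists ([set None] `|` (Some @` range a)), (Vfan f); split=> //;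
    [exists (range a)|exists f].
have [alpha [n [zE alpha_n npa]]] := CA _ Cz; subst z.
have [i _ ai] : range a n by case: Uz => // -[m am [<-]].
have fn : (f alpha <= n)%N by case: Vz => // -[al [m [[-> ->]]]].
have [k' _ gk'] : (g @` setT) alpha by apply: g_onto; exists (Some n, Some (alpha, n)).
have gk : g (k alpha) = alpha by apply: kP; exists k'.
case: (ltnP i (k alpha)) => [ik|ki].
  have := leq_trans (@leq_bigmax _ (fun j : 'I_(k alpha) => (a j).+1) (Ordinal ik)) fn.
  by rewrite -ai ltnn.
by apply: (a_avoid _ _ ki); rewrite /E gk ai.
Qed.

End SelectiveUltrafilter.

Theorem proposition4p2 (p : set (set nat)) :
  free_ultrafilter p -> selective p ->
  S1_Omega_p p /\
  ~ countably_tight_at (baseProd (baseX p) baseSc) (None, None).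
Proof.
move=> p_uf p_sel; split; first exact: S1_Omega_p_selective.
move=> /(_ _ (fan_diagonal_closure p_uf)) [C [CA cC clC]].
exact: countable_fan_diagonal_not_closure p_uf p_sel C CA cC clC.
Qed.
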